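(* Let $\kappa$ be an ordinal of uncountable cofinality and let $Z$, $Z_Y$, $D^\gamma_\alpha$ be as described in the context. Let $\alpha, \beta \in [2,\kappa)$, let $u: \beta \to \alpha$ be a morphism in $Z$, and let $2 \leq \gamma \leq \min(\alpha, \beta)$. Then $u$ lies in $Z_Y$ and does not pass through any vertex less than $\gamma$ if and only if $D^\gamma_\alpha(a) = u\, D^\gamma_\beta(a)\, u^{-1}$ in $Z$ for all $a \in G_\gamma$.
   Context: For an ordinal $\alpha \ge 2$ let $G_\alpha$ be the free group on the set $\alpha$ (i.e. on $\alpha$ generators indexed by the ordinals below $\alpha$); for $\gamma \le \alpha$ let $D^\gamma_\alpha: G_\gamma \to G_\alpha$ be the natural inclusion. Let $Z$ be the groupoid with object set $[2,\kappa)$ generated by: the elements of $G_\alpha$ as automorphisms of the object $\alpha$, for each $\alpha$; and, for each pair $\alpha \neq \beta$ in $[2,\kappa)$, a morphism $y^\beta_\alpha: \beta \to \alpha$; subject to the relations of each group $G_\alpha$ and the relations $y^\beta_\alpha \, D^{\varepsilon}_\beta(a)\, y^\alpha_\beta = D^{\varepsilon}_\alpha(a)$ for all $a \in G_\varepsilon$, where $\varepsilon = \min(\alpha,\beta)$ (in particular $y^\alpha_\beta = (y^\beta_\alpha)^{-1}$). Equivalently, $Z$ is the fundamental groupoid of the graph of groups with vertices $[2,\kappa)$, vertex groups $G_\alpha$, edges $y^\beta_\alpha$ with involution $y^\beta_\alpha \mapsto y^\alpha_\beta$, edge groups $G_{\min(\alpha,\beta)}$ and edge monomorphisms the inclusions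 into the source vertex group. Elements of $G_\alpha$ are regarded as morphisms of $Z$. $Z_Y$ is the subgroupoid of $Z$ generated by the edges $y^\beta_\alpha$; every morphism of $Z_Y$ can be uniquely written as a reduced word in the generators $y^\beta_\alpha$ (with $y^\alpha_\beta$ the inverse of $y^\beta_\alpha$). A morphism of $Z_Y$ passes through a vertex $\delta$ if this reduced word involves a generator with source or target $\delta$; the identity $\mathrm{id}_\delta$ passes through $\delta$ and no other vertex. *)

(* Ordinals below kappa are modelled by a well-ordered type
   (T, lt): every well-order is isomorphic to a unique ordinal kappa, and the
   elements of T are the ordinals < kappa. *)
From Stdlib Require Import List Relations.
Import ListNotations.
Set Implicit Arguments.

Section Z.
Variable T : Type.
Variable lt : T -> T -> Prop.

Definition well_ordering : Prop :=
  (forall x, ~ lt x x) /\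
  (forall x y z, lt x y -> lt y z -> lt x z) /\
  (forall x y, lt x y \/ x = y \/ lt y x) /\
  well_founded lt.

(* kappa (= order type of T) has uncountable cofinality: kappa > 0 and every
   countable (nonempty) subset of kappa is strictly bounded in kappa. *)
Definition uncountable_cofinality : Prop :=
  inhabited T /\ forall f : nat -> T, exists b : T, forall n, lt (f n) b.

Definition le (x y : T) : Prop := lt x y \/ x = y.

(* 2 <= x : the ordinals 0 and 1 lie below x *)
Definition ge2 (x : T) : Prop := exists i j, lt i j /\ lt j x.

(* Generators of the groupoid Z:
   X a i   : the free generator i (i < a) of G_a, an automorphism of vertex a;
   Y b a   : the edge y^b_a : b -> a. *)
Inductive gen : Type := X (a i : T) | Y (b a : T).

(* letters: a generator together with a sign (true = generator, false = its
   formal inverse) *)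
Definition letter : Type := (gen * bool)%type.

Definition valid_gen (g : gen) : Prop :=
  match g with
  | X a i => ge2 a /\ lt i a
  | Y b a => ge2 b /\ ge2 a /\ b <> a
  end.

Definition gsrc (g : gen) : T := match g with X a _ => a | Y b _ => b end.
Definition gtgt (g : gen) : T := match g with X a _ => a | Y _ a => a end.

Definition lsrc (l : letter) : T := if snd l then gsrc (fst l) else gtgt (fst l).
Definition ltgt (l : letter) : T := if snd l then gtgt (fst l) else gsrc (fst l).

Definition linv (l : letter) : letter := (fst l, negb (snd l)).

(* Words are written as products in the usual (composition) order:
   the word [l1; ...; ln] denotes l1 l2 ... ln, where ln is applied first.
   [path s t w] : w is a well-formed morphism s -> t. *)
Fixpoint path (s t : T) (w : list letter) : Prop :=
  match w with
  | [] => s = t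
  | l :: w' => valid_gen (fst l) /\ ltgt l = t /\ path s (lsrc l) w'
  end.

Definition winv (w : list letter) : list letter := rev (map linv w).

(* elements of the free group G_g are represented by words in its generators
   (i, sign) with i < g; D^g_a embeds such a word at the vertex a *)
Definition fword : Type := list (T * bool).
Definition in_G (g : T) (a : fword) : Prop := forall p, In p a -> lt (fst p) g.
Definition D (a : T) (w : fword) : list letter :=
  map (fun p => (X a (fst p), snd p)) w.

(* defining relations of Z (including the free cancellations making it a
   groupoid / each G_a a group) *)
Inductive zrel : list letter -> list letter -> Prop :=
  | zrel_cancel (l : letter) : zrel [l; linv l] []
  | zrel_conj (b a e : T) (w : fword) :
      (* e = min(a,b) *)
      ((le a b /\ e = a) \/ (le b a /\ e = b)) ->
      in_G e w ->
      zrel ((Y b a, true) :: D b w ++ [(Y a b, true)]) (D a w).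

Inductive zstep (s t : T) : list letter -> list letter -> Prop :=
  | ZStep (u v lhs rhs : list letter) :
      zrel lhs rhs ->
      path s t (u ++ lhs ++ v) -> path s t (u ++ rhs ++ v) ->
      zstep s t (u ++ lhs ++ v) (u ++ rhs ++ v).

Definition zeq (s t : T) : list letter -> list letter -> Prop :=
  clos_refl_sym_trans _ (zstep s t).

(* Z_Y: words in the edges y^b_a (y^a_b is the inverse of y^b_a) *)
Definition yword (e : list (T * T)) : list letter :=
  map (fun p => (Y (fst p) (snd p), true)) e.

Fixpoint yreduced (e : list (T * T)) : Prop :=
  match e with
  | p :: ((q :: _) as e') => ~ (fst p = snd q /\ snd p = fst q) /\ yreduced e'
  | _ => True
  end.

Definition passes_through (s : T) (e : list (T * T)) (d : T) : Prop :=
  match e with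
  | [] => d = s
  | _ => exists p, In p e /\ (fst p = d \/ snd p = d)
  end.

Definition in_ZY_avoiding (b a g : T) (u : list letter) : Prop :=
  exists e : list (T * T),
    yreduced e /\ path b a (yword e) /\ zeq b a u (yword e) /\
    (forall d, passes_through b e d -> ~ lt d g).

End Z.

(* Z is the fundamental groupoid of a graph of groups, so its morphisms have a
   normal form. Read a word u from its target t: its edge letters freely reduce
   to an edge path R, and each letter x_i^{+-1} is recorded as a symbol (i, S),
   where S is the reduced edge path leading back to it from t, stripped of its
   last edges whose endpoints both exceed i (x_i commutes past those). The free
   reduction of the symbol word together with R is invariant under the defining
   relations, and u equals the canonical word built from this pair.

   If u is an edge path avoiding all vertices below g, then each x_i with i < g
   commutes past it, which gives the conjugation identity. Conversely, the
   identity for w = x_i says, in the free group on symbols, that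
   N (i, S_i) N^-1 = (i, []) where N is the symbol part of u; hence S_i = [],
   i.e. all edges of R lie above i, and N is a power of (i, []). Two indices
   i < i' < g force N = 1, so u equals the edge path R, which avoids every vertex
   below g. *)

From Stdlib Require Import List Relations Bool ClassicalEpsilon Lia.
Import ListNotations.

(** * Free reduction *)

Section FreeReduction.
Variable A : Type.
Variable inv : A -> A.
Hypothesis inv_inv : forall x, inv (inv x) = x.

(* A reduced word is stored as a stack: its head is the LAST letter of the
   word, so that [push] appends a letter and cancels it against the end. *)
Definition push (S : list A) (x : A) : list A :=
  match S with
  | y :: S' => if excluded_middle_informative (y = inv x) then S' else x :: S
  | [] => [x]
  end.

Definition push_word (S C : list A) : list A := fold_left push C S.

Fixpoint reduced (S : list A) : Prop :=
  match S with
  | x :: ((y :: _) as S') => y <> inv x /\ reduced S'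
  | _ => True
  end.

Definition inv_word (C : list A) : list A := rev (map inv C).

Lemma inv_injective x y : inv x = inv y -> x = y.
Proof. intros E. rewrite <- (inv_inv x), E, inv_inv. reflexivity. Qed.

Lemma push_cases S x :
  (exists S', S = inv x :: S' /\ push S x = S') \/
  (push S x = x :: S /\ forall S', S <> inv x :: S').
Proof.
  destruct S as [|y S']; simpl.
  - right; split; [reflexivity | discriminate].
  - destruct (excluded_middle_informative (y = inv x)) as [->|ne].
    + left; eauto.
    + right; split; [reflexivity | congruence].
Qed.

Lemma reduced_tail x S : reduced (x :: S) -> reduced S.
Proof. destruct S; simpl; tauto. Qed.

Lemma reduced_cons x S : reduced S -> (forall S', S <> inv x :: S') -> reduced (x :: S).
Proof.
  destruct S as [|y S']; simpl; auto.
  intros H ne; split; [intros ->; exact (ne S' eq_refl) | exact H].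
Qed.

Lemma reduced_push S x : reduced S -> reduced (push S x).
Proof.
  intros H. destruct (push_cases S x) as [[S' [-> ->]] | [-> ne]].
  - exact (reduced_tail _ _ H).
  - exact (reduced_cons _ _ H ne).
Qed.

Lemma reduced_push_word S C : reduced S -> reduced (push_word S C).
Proof.
  revert S; induction C as [|x C IH]; simpl; auto.
  intros S H; apply IH, reduced_push, H.
Qed.

Lemma push_pushV S x : reduced S -> push (push S x) (inv x) = S.
Proof.
  intros H. destruct (push_cases S x) as [[S' [-> ->]] | [-> _]].
  - destruct (push_cases S' (inv x)) as [[S'' [-> _]] | [-> _]]; [|reflexivity].
    destruct H as [H _]. contradiction.
  - destruct (push_cases (x :: S) (inv x)) as [[S' [E ->]] | [_ ne]].
    + congruence.
    + destruct (ne S). rewrite inv_inv. reflexivity.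
Qed.

Lemma push_word_app S C D : push_word S (C ++ D) = push_word (push_word S C) D.
Proof. apply fold_left_app. Qed.

Lemma inv_word_app C D : inv_word (C ++ D) = inv_word D ++ inv_word C.
Proof. unfold inv_word; rewrite map_app, rev_app_distr; reflexivity. Qed.

Lemma inv_word_involutive C : inv_word (inv_word C) = C.
Proof.
  unfold inv_word. rewrite map_rev, map_map, rev_involutive.
  induction C as [|x C IH]; simpl; auto. rewrite inv_inv, IH; reflexivity.
Qed.

Lemma push_word_cancel S C : reduced S -> push_word S (C ++ inv_word C) = S.
Proof.
  revert S; induction C as [|x C IH]; intros S H; simpl; auto.
  change (inv_word (x :: C)) with (inv_word C ++ [inv x]).
  rewrite app_assoc, push_word_app, IH by (apply reduced_push; auto).
  apply push_pushV, H.
Qed.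

Lemma push_word_cancelV S C : reduced S -> push_word S (inv_word C ++ C) = S.
Proof.
  intros H. rewrite <- (inv_word_involutive C) at 2. apply push_word_cancel, H.
Qed.

Lemma push_word_rev_reduced S : reduced S -> push_word [] (rev S) = S.
Proof.
  induction S as [|x S IH]; simpl; auto.
  intros H. rewrite push_word_app, IH by exact (reduced_tail _ _ H). simpl.
  destruct (push_cases S x) as [[S' [-> _]] | [-> _]]; [|reflexivity].
  destruct H as [H _]. congruence.
Qed.

Lemma push_word_rev_push S R x : reduced S -> reduced R ->
  push_word S (rev (push R x)) = push (push_word S (rev R)) x.
Proof.
  intros HS HR. destruct (push_cases R x) as [[R' [-> ->]] | [-> _]].
  - simpl. rewrite push_word_app. simpl.
    rewrite <- (inv_inv x) at 2. rewrite push_pushV; auto.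
    apply reduced_push_word, HS.
  - simpl. rewrite push_word_app. reflexivity.
Qed.

Lemma push_word_reduce S C : reduced S -> push_word S C = push_word S (rev (push_word [] C)).
Proof.
  intros HS. induction C as [|x C IH] using rev_ind; simpl; auto.
  rewrite !push_word_app, IH. simpl.
  rewrite push_word_rev_push; auto. apply reduced_push_word; simpl; auto.
Qed.

Lemma Forall_push (P : A -> Prop) S x : Forall P S -> P x -> Forall P (push S x).
Proof.
  intros HS Hx. destruct (push_cases S x) as [[S' [-> ->]] | [-> _]].
  - inversion HS; assumption.
  - constructor; assumption.
Qed.

Lemma Forall_push_word (P : A -> Prop) S C : Forall P S -> Forall P C -> Forall P (push_word S C).
Proof.
  revert S; induction C as [|x C IH]; simpl; auto.
  intros S HS HC. inversion HC; subst. apply IH; auto. apply Forall_push; auto.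
Qed.

Lemma cons_eq_snoc (x y : A) N : x :: N = N ++ [y] -> x = y /\ Forall (eq x) N.
Proof.
  revert x; induction N as [|n N IH]; simpl; intros x H.
  - injection H as ->. auto.
  - injection H as -> H. destruct (IH _ H) as [-> F]. auto.
Qed.

Lemma reduced_snoc N c x : reduced (N ++ [c]) -> x <> inv c -> reduced (N ++ [c; x]).
Proof. induction N as [|n [|m N] IH]; simpl; tauto. Qed.

Lemma reduced_app_l N M : reduced (N ++ M) -> reduced N.
Proof. induction N as [|n [|m N] IH]; simpl; tauto. Qed.

(* [push_word [x] (rev N)] is the reduced form of the word x N. *)
Lemma push_word_letter_rev x N : reduced N ->
  (exists N', N = N' ++ [inv x] /\ push_word [x] (rev N) = N') \/
  push_word [x] (rev N) = N ++ [x].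
Proof.
  intros HN. destruct N as [|n N] using rev_ind; [right; reflexivity|]. clear IHN.
  rewrite rev_app_distr, push_word_app. change (push_word [x] (rev [n])) with (push [x] n).
  destruct (push_cases [x] n) as [[S' [E ->]] | [Ep ne]].
  - injection E as Ex <-. left. exists N. split.
    + rewrite Ex, inv_inv. reflexivity.
    + apply push_word_rev_reduced, (reduced_app_l _ _ HN).
  - right. transitivity (push_word [] (rev (N ++ [n; x]))).
    + rewrite rev_app_distr, push_word_app.
      change (push_word [] (rev [n; x])) with (push [x] n). rewrite Ep. reflexivity.
    + rewrite <- app_assoc. apply push_word_rev_reduced, reduced_snoc; auto.
      intros ->. apply (ne []). reflexivity.
Qed.

Lemma conj_letter_reduced N x y : reduced N -> push_word [x] (rev N) = push N y ->
  y = x /\ forall z, In z N -> z = x \/ z = inv x.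
Proof.
  intros HN E.
  destruct (push_word_letter_rev x N HN) as [[N' [EN El]] | El];
    destruct (push_cases N y) as [[S' [EN' Er]] | [Er _]];
    rewrite El, Er in E.
  - rewrite EN', <- E in EN. destruct (cons_eq_snoc _ _ _ EN) as [Ey F].
    rewrite Forall_forall in F.
    split; [exact (inv_injective _ _ Ey)|].
    intros z Hz. right. rewrite EN', <- E in Hz. destruct Hz as [<-|Hz].
    + exact Ey.
    + rewrite <- (F z Hz). exact Ey.
  - rewrite E in EN. apply (f_equal (@length A)) in EN.
    rewrite length_app in EN. simpl in EN. lia.
  - rewrite <- E in EN'. apply (f_equal (@length A)) in EN'.
    simpl in EN'. rewrite length_app in EN'. simpl in EN'. lia.
  - destruct (cons_eq_snoc _ _ _ (eq_sym E)) as [-> F]. rewrite Forall_forall in F.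
    split; [reflexivity|]. intros z Hz; left; symmetry; exact (F z Hz).
Qed.

Lemma conj_letter I x y : push_word [] (I ++ [y] ++ inv_word I) = [x] ->
  y = x /\ forall z, In z (push_word [] I) -> z = x \/ z = inv x.
Proof.
  intros H. apply conj_letter_reduced; [apply reduced_push_word; simpl; auto|].
  rewrite <- push_word_reduce by (simpl; auto).
  rewrite <- H, <- push_word_app, <- !app_assoc, app_assoc, push_word_app, push_word_cancelV.
  - rewrite push_word_app. reflexivity.
  - apply reduced_push_word; simpl; auto.
Qed.

End FreeReduction.

(** * Words and equality in Z *)

Section Groupoid.
Variable T : Type.
Variable lt : T -> T -> Prop.
Hypothesis lt_irrefl : forall x, ~ lt x x.
Hypothesis lt_trans : forall x y z, lt x y -> lt y z -> lt x z.
Hypothesis lt_total : forall x y, lt x y \/ x = y \/ lt y x.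

Notation path := (path lt).
Notation zeq := (zeq lt).
Notation letter := (letter T).

Lemma path_app s t A B : path s t (A ++ B) <-> exists m, path m t A /\ path s m B.
Proof.
  revert t; induction A as [|l A IH]; simpl; intros t.
  - split; [intros H; exists t; auto | intros [m [-> H]]; exact H].
  - split.
    + intros [H1 [H2 H3]]. apply IH in H3. destruct H3 as [m [H4 H5]]. exists m; auto.
    + intros [m [[H1 [H2 H3]] H4]]. repeat split; auto. apply IH; eauto.
Qed.

Lemma path_cat s m t A B : path m t A -> path s m B -> path s t (A ++ B).
Proof. intros; apply path_app; eauto. Qed.

Lemma path_single s t (l : letter) :
  path s t [l] <-> valid_gen lt (fst l) /\ ltgt l = t /\ lsrc l = s.
Proof. simpl. split; intros [H1 [H2 H3]]; auto. Qed.

Lemma linv_involutive (l : letter) : linv (linv l) = l.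
Proof. destruct l as [g []]; reflexivity. Qed.

Lemma winv_cons (l : letter) x : winv (l :: x) = winv x ++ [linv l].
Proof. reflexivity. Qed.

Lemma winv_involutive (x : list letter) : winv (winv x) = x.
Proof.
  unfold winv. rewrite map_rev, map_map, rev_involutive.
  induction x as [|l x IH]; simpl; auto. rewrite linv_involutive, IH; reflexivity.
Qed.

Lemma path_linv s t (l : letter) : path s t [l] -> path t s [linv l].
Proof. rewrite !path_single. destruct l as [g []]; simpl; tauto. Qed.

Lemma path_winv s t x : path s t x -> path t s (winv x).
Proof.
  revert t; induction x as [|l x IH]; simpl; intros t.
  - intros ->; reflexivity.
  - intros [H1 [H2 H3]]. rewrite winv_cons. apply path_cat with (lsrc l); auto.
    apply path_linv, path_single; auto.
Qed.

Lemma zeq_refl s t x : zeq s t x x.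
Proof. apply rst_refl. Qed.

Lemma zeq_sym s t x y : zeq s t x y -> zeq s t y x.
Proof. apply rst_sym. Qed.

Lemma zeq_trans s t x y z : zeq s t x y -> zeq s t y z -> zeq s t x z.
Proof. apply rst_trans. Qed.

Lemma zeq_ctx s' t' x y s t U V : zeq s' t' x y -> path t' t U -> path s s' V ->
  zeq s t (U ++ x ++ V) (U ++ y ++ V).
Proof.
  intros H HU HV. induction H as [x y [u v lhs rhs Hr Hp1 Hp2]| | |].
  - assert (E : forall m, U ++ (u ++ m ++ v) ++ V = (U ++ u) ++ m ++ (v ++ V))
      by (intros; rewrite <- !app_assoc; reflexivity).
    apply rst_step. rewrite !E.
    constructor; auto; rewrite <- E; apply path_cat with t'; auto; apply path_cat with s'; auto.
  - apply zeq_refl.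
  - apply zeq_sym; auto.
  - eapply zeq_trans; eauto.
Qed.

Lemma zeq_ctxl s' t x y s V : zeq s' t x y -> path s s' V -> zeq s t (x ++ V) (y ++ V).
Proof. intros H HV. exact (zeq_ctx _ _ _ _ s t [] V H eq_refl HV). Qed.

Lemma zeq_ctxr s t' x y t U : zeq s t' x y -> path t' t U -> zeq s t (U ++ x) (U ++ y).
Proof.
  intros H HU. pose proof (zeq_ctx _ _ _ _ s t U [] H HU eq_refl) as E.
  rewrite !app_nil_r in E. exact E.
Qed.

Lemma zeq_ctxr_nil s t' x t U : zeq s t' x [] -> path t' t U -> zeq s t (U ++ x) U.
Proof. intros H HU. rewrite <- (app_nil_r U) at 2. exact (zeq_ctxr _ _ _ _ _ _ H HU). Qed.

Lemma zeq_rel s t x y : zrel lt x y -> path s t x -> path s t y -> zeq s t x y.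
Proof.
  intros Hr Hx Hy. apply rst_step.
  pose proof (ZStep s t [] [] Hr) as Z. simpl in Z. rewrite !app_nil_r in Z.
  exact (Z Hx Hy).
Qed.

Lemma zeq_path s t x y : zeq s t x y -> path s t x <-> path s t y.
Proof.
  induction 1 as [x y [u v lhs rhs _ Hp1 Hp2]| | |]; tauto.
Qed.

Lemma zeq_letter_cancel s t (l : letter) : path s t [l] -> zeq t t [l; linv l] [].
Proof.
  intros Hl. apply zeq_rel; [apply zrel_cancel | | reflexivity].
  apply (path_cat _ s _ [l] [linv l]); [exact Hl | apply path_linv, Hl].
Qed.

Lemma zeq_cat_winv s t x : path s t x -> zeq t t (x ++ winv x) [].
Proof.
  revert t; induction x as [|l x IH]; simpl; intros t.
  - intros _; apply zeq_refl.
  - intros [Hv [Ht Hx]]. rewrite winv_cons.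
    assert (Hl : path (lsrc l) t [l]) by (apply path_single; auto).
    apply zeq_trans with ([l] ++ [] ++ [linv l]); [|exact (zeq_letter_cancel _ _ _ Hl)].
    replace (l :: x ++ winv x ++ [linv l]) with ([l] ++ (x ++ winv x) ++ [linv l])
      by (simpl; rewrite <- app_assoc; reflexivity).
    apply zeq_ctx with (lsrc l) (lsrc l); auto. apply path_linv, Hl.
Qed.

Lemma zeq_winv_cat s t x : path s t x -> zeq s s (winv x ++ x) [].
Proof.
  intros H. pose proof (zeq_cat_winv _ _ _ (path_winv _ _ _ H)) as E.
  rewrite winv_involutive in E. exact E.
Qed.

Lemma zeq_winv s t x y : path s t x -> zeq s t x y -> zeq t s (winv x) (winv y).
Proof.
  intros Hx H. assert (Hy : path s t y) by (apply (zeq_path _ _ _ _ H), Hx).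
  apply zeq_trans with (winv x ++ y ++ winv y).
  - apply zeq_sym, (zeq_ctxr_nil _ _ _ s _ (zeq_cat_winv _ _ _ Hy) (path_winv _ _ _ Hx)).
  - apply zeq_trans with (winv x ++ x ++ winv y).
    + apply zeq_ctx with s t; [apply zeq_sym, H | apply path_winv, Hx | apply path_winv, Hy].
    + rewrite app_assoc. exact (zeq_ctxl _ _ _ _ t _ (zeq_winv_cat _ _ _ Hx) (path_winv _ _ _ Hy)).
Qed.

Lemma path_D c (w : fword T) : ge2 lt c -> (forall x, In x w -> lt (fst x) c) -> path c c (D c w).
Proof.
  intros Hc Hw. induction w as [|[i sg] w IH]; simpl; auto.
  assert (Hi : lt i c) by exact (Hw (i, sg) (or_introl eq_refl)).
  destruct sg; simpl; repeat split; auto; apply IH; intros x Hx; apply Hw; right; exact Hx.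
Qed.

(** * Edge paths commuting with vertex groups *)

Lemma path_X c i sg : ge2 lt c -> lt i c -> path c c [(X c i, sg)].
Proof. destruct sg; simpl; auto. Qed.

Lemma zrel_conj_below a b (w : fword T) :
  (forall x, In x w -> lt (fst x) a /\ lt (fst x) b) ->
  zrel lt ((Y b a, true) :: D b w ++ [(Y a b, true)]) (D a w).
Proof.
  intros H. destruct (lt_total a b) as [h|[<-|h]].
  - apply zrel_conj with (e := a); [left; split; [left|]; auto | intros x Hx; apply H, Hx].
  - apply zrel_conj with (e := a); [left; split; [right|]; auto | intros x Hx; apply H, Hx].
  - apply zrel_conj with (e := b); [right; split; [left|]; auto | intros x Hx; apply H, Hx].
Qed.

Lemma edge_round_trip a b : ge2 lt a -> ge2 lt b -> a <> b ->
  zeq a a [(Y b a, true); (Y a b, true)] [].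
Proof.
  intros Ha Hb Hab. apply zeq_rel; [| simpl; repeat split; auto | reflexivity].
  exact (zrel_conj_below a b [] (fun x Hx => match Hx with end)).
Qed.

Lemma edge_inv a b : ge2 lt a -> ge2 lt b -> a <> b ->
  zeq a b [(Y b a, false)] [(Y a b, true)].
Proof.
  intros Ha Hb Hab.
  assert (Hy : path b a [(Y b a, true)]) by (simpl; repeat split; auto).
  apply zeq_trans with ([(Y a b, true)] ++ [(Y b a, true); (Y b a, false)]).
  - apply zeq_sym.
    exact (zeq_ctxl _ _ _ _ a _ (edge_round_trip b a Hb Ha (not_eq_sym Hab)) (path_linv _ _ _ Hy)).
  - apply (zeq_ctxr_nil _ _ _ b [(Y a b, true)] (zeq_letter_cancel _ _ _ Hy)).
    simpl; repeat split; auto.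
Qed.

Lemma edge_D_commute p q (w : fword T) : ge2 lt p -> ge2 lt q -> p <> q ->
  (forall x, In x w -> lt (fst x) p /\ lt (fst x) q) ->
  zeq p q ((Y p q, true) :: D p w) (D q w ++ [(Y p q, true)]).
Proof.
  intros Hp Hq Hpq Hw.
  assert (Hy : path p q [(Y p q, true)]) by (simpl; repeat split; auto).
  assert (HDp : path p p (D p w)) by (apply path_D; auto; apply Hw).
  assert (HDq : path q q (D q w)) by (apply path_D; auto; apply Hw).
  apply zeq_trans with (((Y p q, true) :: D p w) ++ [(Y q p, true); (Y p q, true)]).
  - apply zeq_sym, (zeq_ctxr_nil _ _ _ q _ (edge_round_trip p q Hp Hq Hpq)).
    apply (path_cat _ p _ [_]); auto.
  - replace (((Y p q, true) :: D p w) ++ [(Y q p, true); (Y p q, true)])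
      with (((Y p q, true) :: D p w ++ [(Y q p, true)]) ++ [(Y p q, true)])
      by (simpl; rewrite <- app_assoc; reflexivity).
    apply zeq_ctxl with q; [|exact Hy].
    apply zeq_rel; [apply zrel_conj_below; intros x Hx; apply and_comm, Hw, Hx | | exact HDq].
    apply (path_cat _ p _ [_]); [simpl; repeat split; auto|].
    apply path_cat with p; [exact HDp | simpl; repeat split; auto].
Qed.

Definition edge_above (i : T) (f : T * T) : Prop := lt i (fst f) /\ lt i (snd f).

Lemma edge_path_D_commute c d e (w : fword T) : path c d (yword e) ->
  (forall x, In x w -> Forall (edge_above (fst x)) e) ->
  zeq c d (yword e ++ D c w) (D d w ++ yword e).
Proof.
  revert d; induction e as [|f e IH]; intros d He Hw; simpl in He.
  - subst d. rewrite app_nil_r. apply zeq_refl.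
  - destruct He as [[Hf1 [Hf2 Hf3]] [<- He]].
    change (yword (f :: e)) with ([(Y (fst f) (snd f), true)] ++ yword e).
    rewrite <- app_assoc.
    assert (Hw' : forall x, In x w -> Forall (edge_above (fst x)) e)
      by (intros x Hx; specialize (Hw x Hx); inversion Hw; auto).
    apply zeq_trans with ([(Y (fst f) (snd f), true)] ++ D (fst f) w ++ yword e).
    + apply (zeq_ctxr _ _ _ _ _ [_] (IH _ He Hw')). simpl; repeat split; auto.
    + rewrite !app_assoc. apply zeq_ctxl with (fst f); [|exact He].
      apply edge_D_commute; auto.
      intros x Hx. specialize (Hw x Hx). inversion Hw as [|? ? [H1 H2]]. auto.
Qed.

Lemma lt_le_trans x y z : lt x y -> le lt y z -> lt x z.
Proof. intros H [H' | <-]; eauto. Qed.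

Lemma not_lt_of_le x y : le lt y x -> ~ lt x y.
Proof. intros H H'. exact (lt_irrefl _ (lt_le_trans _ _ _ H' H)). Qed.

Lemma lt_of_not_lt d g i : ~ lt d g -> lt i g -> lt i d.
Proof. intros H Hi. destruct (lt_total d g) as [h|[->|h]]; [contradiction | exact Hi | eauto]. Qed.

Lemma avoiding_edge_above b e g i : (forall d, passes_through b e d -> ~ lt d g) ->
  lt i g -> Forall (edge_above i) e.
Proof.
  intros Hav Hi. apply Forall_forall. intros f Hf.
  assert (Hd : forall d, fst f = d \/ snd f = d -> lt i d).
  { intros d Hd. apply lt_of_not_lt with g; auto. apply Hav.
    destruct e as [|f0 e]; [destruct Hf | exists f; auto]. }
  split; apply Hd; auto.
Qed.

Lemma in_ZY_avoiding_conj_D a b g u : ge2 lt a -> ge2 lt b -> le lt g a -> le lt g b ->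
  path b a u -> in_ZY_avoiding lt b a g u ->
  forall w, in_G lt g w -> zeq a a (D a w) (u ++ D b w ++ winv u).
Proof.
  intros Ha Hb Hga Hgb Hu [e [_ [He [Hue Hav]]]] w Hw.
  assert (HDa : path a a (D a w))
    by (apply path_D; auto; intros x Hx; exact (lt_le_trans _ _ _ (Hw x Hx) Hga)).
  assert (HDb : path b b (D b w))
    by (apply path_D; auto; intros x Hx; exact (lt_le_trans _ _ _ (Hw x Hx) Hgb)).
  apply zeq_sym, zeq_trans with (yword e ++ D b w ++ winv u).
  - apply zeq_ctxl with b; [exact Hue | apply path_cat with b; [exact HDb | apply path_winv, Hu]].
  - apply zeq_trans with ((yword e ++ D b w) ++ winv (yword e)).
    + rewrite app_assoc. apply zeq_ctxr with b.
      * apply zeq_winv; assumption.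
      * apply path_cat with b; assumption.
    + apply zeq_trans with (D a w ++ yword e ++ winv (yword e)).
      * rewrite app_assoc. apply zeq_ctxl with b; [|apply path_winv, He].
        apply edge_path_D_commute; [exact He|].
        intros x Hx. exact (avoiding_edge_above _ _ _ _ Hav (Hw x Hx)).
      * exact (zeq_ctxr_nil _ _ _ a _ (zeq_cat_winv _ _ _ He) HDa).
Qed.

(** * The invariant *)

Definition swap (f : T * T) : T * T := (snd f, fst f).

Lemma swap_involutive f : swap (swap f) = f.
Proof. destruct f; reflexivity. Qed.

Definition symbol : Type := ((T * list (T * T)) * bool)%type.

Definition symbol_inv (x : symbol) : symbol := (fst x, negb (snd x)).

Lemma symbol_inv_involutive x : symbol_inv (symbol_inv x) = x.
Proof. destruct x as [y []]; reflexivity. Qed.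

Notation edge_push := (push (T * T) swap).
Notation edge_push_word := (push_word (T * T) swap).
Notation symbol_push_word := (push_word symbol symbol_inv).

Definition letter_edges (l : letter) : list (T * T) :=
  match l with
  | (Y p q, true) => [(p, q)]
  | (Y p q, false) => [(q, p)]
  | (X _ _, _) => []
  end.

Definition edges (u : list letter) : list (T * T) := flat_map letter_edges u.

Fixpoint strip (i : T) (S : list (T * T)) : list (T * T) :=
  match S with
  | f :: S' => if excluded_middle_informative (edge_above i f) then strip i S' else S
  | [] => []
  end.

(* L is the reduced edge stack of the part of the word already read, starting
   from its target end. *)
Definition letter_symbols (L : list (T * T)) (l : letter) : list symbol :=
  match l with
  | (X _ i, sg) => [((i, strip i L), sg)]
  | (Y _ _, _) => []
  end.

Fixpoint symbols (L : list (T * T)) (u : list letter) : list symbol :=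
  match u with
  | [] => []
  | l :: u' => letter_symbols L l ++ symbols (edge_push_word L (letter_edges l)) u'
  end.

Definition invariant (u : list letter) : list symbol * list (T * T) :=
  (symbol_push_word [] (symbols [] u), edge_push_word [] (edges u)).

Lemma edges_app u v : edges (u ++ v) = edges u ++ edges v.
Proof. apply flat_map_app. Qed.

Lemma edges_D c (w : fword T) : edges (D c w) = [].
Proof. induction w; simpl; auto. Qed.

Lemma edges_winv u : edges (winv u) = inv_word _ swap (edges u).
Proof.
  induction u as [|[g sg] u IH]; simpl; auto.
  rewrite winv_cons, edges_app, IH, inv_word_app.
  destruct g, sg; simpl; rewrite ?app_nil_r; reflexivity.
Qed.

Lemma strip_split i S : exists P, S = P ++ strip i S /\ Forall (edge_above i) P.
Proof.
  induction S as [|f S IH]; simpl.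
  - exists []; auto.
  - destruct (excluded_middle_informative (edge_above i f)) as [h|h].
    + destruct IH as [P [E F]]. exists (f :: P). simpl; rewrite <- E; auto.
    + exists []; auto.
Qed.

Lemma strip_nil i S : strip i S = [] <-> Forall (edge_above i) S.
Proof.
  split.
  - intros H. destruct (strip_split i S) as [P [E F]]. rewrite H, app_nil_r in E. subst; auto.
  - induction 1 as [|f S Hf _ IH]; simpl; auto.
    destruct (excluded_middle_informative (edge_above i f)); [exact IH | contradiction].
Qed.

Lemma strip_push i L f : edge_above i f -> strip i (edge_push L f) = strip i L.
Proof.
  intros H. destruct (push_cases _ swap L f) as [[L' [-> ->]] | [-> _]]; simpl.
  - destruct (excluded_middle_informative (edge_above i (swap f))) as [_|h]; auto.
    destruct h, H; split; auto.
  - destruct (excluded_middle_informative (edge_above i f)); [reflexivity | contradiction].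
Qed.

Lemma symbols_app L u v :
  symbols L (u ++ v) = symbols L u ++ symbols (edge_push_word L (edges u)) v.
Proof.
  revert L; induction u as [|l u IH]; intros L; simpl; auto.
  rewrite IH, <- app_assoc, push_word_app. reflexivity.
Qed.

Lemma symbols_D L c (w : fword T) :
  symbols L (D c w) = map (fun x => ((fst x, strip (fst x) L), snd x)) w.
Proof. induction w as [|x w IH]; simpl; auto. rewrite IH. reflexivity. Qed.

Lemma symbols_winv u L : reduced _ swap L ->
  symbols (edge_push_word L (edges u)) (winv u) = inv_word _ symbol_inv (symbols L u).
Proof.
  revert L; induction u as [|l u IH]; intros L HL; simpl; auto.
  rewrite winv_cons, symbols_app, push_word_app, IH, edges_winv, <- push_word_app,
    push_word_cancel, inv_word_app
    by (apply swap_involutive || apply reduced_push_word; auto).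
  f_equal. destruct l as [[c i|p q] sg]; reflexivity.
Qed.

Lemma zrel_invariant lhs rhs L : zrel lt lhs rhs -> reduced _ swap L ->
  edge_push_word L (edges lhs) = edge_push_word L (edges rhs) /\
  symbol_push_word [] (symbols L lhs) = symbol_push_word [] (symbols L rhs).
Proof.
  intros Hr HL. destruct Hr as [l|b a e w He Hw].
  - change [l; linv l] with ([l] ++ winv [l]).
    rewrite edges_app, edges_winv, symbols_app, symbols_winv, push_word_cancel, push_word_cancel;
      auto using swap_involutive, symbol_inv_involutive; simpl; auto.
  - assert (Hi : forall x, In x w -> edge_above (fst x) (b, a)).
    { intros x Hx. specialize (Hw x Hx).
      destruct He as [[[H|<-] ->]|[[H|<-] ->]]; split; simpl; eauto. }
    simpl. rewrite edges_app, !edges_D, symbols_app, !symbols_D. simpl.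
    rewrite !app_nil_r. split.
    + apply (push_pushV _ swap swap_involutive L (b, a) HL).
    + f_equal. apply map_ext_in. intros x Hx. rewrite strip_push; auto.
Qed.

Lemma zstep_invariant s t x y : zstep lt s t x y -> invariant x = invariant y.
Proof.
  intros [u v lhs rhs Hr _ _]. unfold invariant.
  set (L := edge_push_word [] (edges u)).
  assert (HL : reduced _ swap L) by (apply reduced_push_word; simpl; auto).
  destruct (zrel_invariant _ _ _ Hr HL) as [E1 E2].
  rewrite !symbols_app, !edges_app, !push_word_app. fold L. rewrite E1.
  rewrite (push_word_reduce _ _ symbol_inv_involutive _ (symbols L lhs)),
    (push_word_reduce _ _ symbol_inv_involutive _ (symbols L rhs)), E2
    by (apply reduced_push_word; simpl; auto).
  reflexivity.
Qed.

Lemma zeq_invariant s t x y : zeq s t x y -> invariant x = invariant y.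
Proof.
  induction 1; [eapply zstep_invariant; eauto | reflexivity | congruence | congruence].
Qed.

(** * Normal form *)

Definition src (t : T) (S : list (T * T)) : T := match S with [] => t | f :: _ => fst f end.

(* Edge stacks are read from the target t: [edge_word S] is a path from [src t S] to t. *)
Definition edge_word (S : list (T * T)) : list letter := yword (rev S).

Definition symbol_ok (t : T) (x : symbol) : Prop :=
  let '((i, R), _) := x in
  path (src t R) t (edge_word R) /\ ge2 lt (src t R) /\ lt i (src t R).

Definition symbol_word (t : T) (x : symbol) : list letter :=
  let '((i, R), sg) := x in
  edge_word R ++ [(X (src t R) i, sg)] ++ winv (edge_word R).

Definition symbols_word (t : T) (F : list symbol) : list letter :=
  flat_map (symbol_word t) (rev F).

Definition canon (t : T) (u : list letter) : list letter :=
  symbols_word t (fst (invariant u)) ++ edge_word (snd (invariant u)).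

Lemma edge_word_app S S' : edge_word (S ++ S') = edge_word S' ++ edge_word S.
Proof. unfold edge_word, yword. rewrite rev_app_distr, map_app. reflexivity. Qed.

Lemma path_edge_word_cons s t f S : path s t (edge_word (f :: S)) <->
  valid_gen lt (Y (fst f) (snd f)) /\ path (snd f) t (edge_word S) /\ s = fst f.
Proof.
  change (f :: S) with ([f] ++ S). rewrite edge_word_app, path_app. simpl.
  split; [intros [m [H1 [H2 [<- H3]]]] | intros [H1 [H2 ->]]]; eauto 6.
Qed.

Lemma path_edge_push m t L f : path m t (edge_word L) -> valid_gen lt (Y (fst f) (snd f)) ->
  snd f = m -> path (fst f) t (edge_word (edge_push L f)).
Proof.
  intros H Hv <-. destruct (push_cases _ swap L f) as [[L' [-> ->]] | [-> _]].
  - apply path_edge_word_cons in H. destruct H as [_ [H _]]. exact H.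
  - apply path_edge_word_cons. auto.
Qed.

Lemma path_edge_push_letter m t s L l : path m t (edge_word L) -> path s m [l] ->
  path s t (edge_word (edge_push_word L (letter_edges l))).
Proof.
  intros H Hl. apply path_single in Hl. destruct Hl as [Hv [<- <-]].
  destruct l as [[c i|p q] []]; simpl in *; auto.
  - apply (path_edge_push _ _ _ (p, q) H); auto.
  - destruct Hv as [Hp [Hq Hpq]].
    apply (path_edge_push _ _ _ (q, p) H); simpl; auto.
Qed.

Lemma src_of_path x t S : path x t (edge_word S) -> src t S = x.
Proof.
  destruct S as [|f S]; simpl; [intros ->; reflexivity|].
  rewrite path_edge_word_cons. intros [_ [_ ->]]. reflexivity.
Qed.

Lemma path_edges_above i e c z : path c z (yword e) -> Forall (edge_above i) e ->
  ge2 lt c -> lt i c -> ge2 lt z /\ lt i z.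
Proof.
  revert z; induction e as [|f e IH]; simpl; intros z H He Hc Hi.
  - subst; auto.
  - destruct H as [[_ [Hv _]] [<- _]]. inversion He as [|? ? [_ H2]]. auto.
Qed.

Lemma strip_decomp c t i L sg : path c t (edge_word L) -> ge2 lt c -> lt i c ->
  exists P, L = P ++ strip i L /\ Forall (edge_above i) P /\
    path c (src t (strip i L)) (edge_word P) /\ symbol_ok t ((i, strip i L), sg).
Proof.
  intros H Hc Hi. destruct (strip_split i L) as [P [E F]].
  exists P. split; [exact E | split; [exact F|]].
  rewrite E, edge_word_app, path_app in H. destruct H as [z [H1 H2]].
  rewrite (src_of_path _ _ _ H1).
  split; [exact H2|]. simpl. rewrite (src_of_path _ _ _ H1). split; [exact H1|].
  apply (path_edges_above i (rev P) c z); auto. apply Forall_rev, F.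
Qed.

Lemma symbols_ok t u : forall L s m, path s m u -> path m t (edge_word L) ->
  Forall (symbol_ok t) (symbols L u) /\ path s t (edge_word (edge_push_word L (edges u))).
Proof.
  induction u as [|l u IH]; intros L s m Hu HL; simpl.
  - simpl in Hu; subst; auto.
  - destruct Hu as [Hv [Ht Hu]].
    assert (Hl : path (lsrc l) m [l]) by (apply path_single; auto).
    destruct (IH _ _ _ Hu (path_edge_push_letter _ _ _ _ _ HL Hl)) as [IH1 IH2].
    rewrite push_word_app. split; [|exact IH2].
    apply Forall_app; split; [|exact IH1].
    destruct l as [[c i|p q] sg]; simpl; auto.
    destruct Hv as [Hc Hi]. assert (HLc : path c t (edge_word L)) by (destruct sg; subst; exact HL).
    destruct (strip_decomp c t i L sg HLc Hc Hi) as [P [_ [_ [_ Hok]]]]. auto.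
Qed.

Lemma path_symbols_word t F : Forall (symbol_ok t) F -> path t t (symbols_word t F).
Proof.
  intros HF. apply Forall_rev in HF. unfold symbols_word.
  induction HF as [|[[i R] sg] F' [H1 [H2 H3]] _ IH]; simpl; auto.
  apply path_cat with t; auto.
  apply path_cat with (src t R); [exact H1|].
  apply (path_cat _ (src t R) _ [_]); [apply path_X; auto | apply path_winv, H1].
Qed.

Lemma symbol_word_cancel t x : symbol_ok t x ->
  zeq t t (symbol_word t (symbol_inv x) ++ symbol_word t x) [].
Proof.
  destruct x as [[i R] sg]. intros [H1 [H2 H3]]. simpl.
  set (W := edge_word R) in *. set (d := src t R) in *.
  assert (Hx : forall b, path d d [(X d i, b)]) by (intros; apply path_X; auto).
  apply zeq_trans with ((W ++ [(X d i, negb sg)]) ++ [] ++ ([(X d i, sg)] ++ winv W)).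
  - replace ((W ++ (X d i, negb sg) :: winv W) ++ W ++ (X d i, sg) :: winv W)
      with ((W ++ [(X d i, negb sg)]) ++ (winv W ++ W) ++ ([(X d i, sg)] ++ winv W))
      by (rewrite <- !app_assoc; reflexivity).
    apply zeq_ctx with d d; [exact (zeq_winv_cat _ _ _ H1) | apply path_cat with d; auto |].
    apply (path_cat _ d _ [_] (winv W)); [auto | apply path_winv, H1].
  - rewrite app_nil_l, <- app_assoc.
    change (zeq t t (W ++ [(X d i, negb sg); (X d i, sg)] ++ winv W) []).
    apply zeq_trans with (W ++ [] ++ winv W); [|exact (zeq_cat_winv _ _ _ H1)].
    apply zeq_ctx with d d; [| exact H1 | apply path_winv, H1].
    pose proof (zeq_letter_cancel _ _ _ (Hx (negb sg))) as E.
    change (linv (X d i, negb sg)) with (X d i, negb (negb sg)) in E.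
    rewrite negb_involutive in E. exact E.
Qed.

Lemma symbols_word_push t F x : Forall (symbol_ok t) F -> symbol_ok t x ->
  zeq t t (symbols_word t F ++ symbol_word t x) (symbols_word t (push _ symbol_inv F x)).
Proof.
  intros HF Hx. unfold symbols_word.
  destruct (push_cases _ symbol_inv F x) as [[F' [-> ->]] | [-> _]].
  - simpl. rewrite flat_map_app, <- app_assoc. simpl. rewrite app_nil_r.
    apply (zeq_ctxr_nil _ _ _ t _ (symbol_word_cancel t x Hx)).
    apply path_symbols_word. inversion HF; auto.
  - simpl. rewrite flat_map_app. simpl. rewrite app_nil_r. apply zeq_refl.
Qed.

Lemma invariant_snoc u l :
  invariant (u ++ [l]) =
  (symbol_push_word (fst (invariant u)) (letter_symbols (snd (invariant u)) l),
   edge_push_word (snd (invariant u)) (letter_edges l)).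
Proof.
  unfold invariant; simpl. rewrite symbols_app, edges_app, !push_word_app. simpl.
  rewrite !app_nil_r. reflexivity.
Qed.

Lemma zeq_edge_word_X c t i R sg : path c t (edge_word R) -> ge2 lt c -> lt i c ->
  zeq c t (edge_word R ++ [(X c i, sg)]) (symbol_word t ((i, strip i R), sg) ++ edge_word R).
Proof.
  intros HR Hc Hi.
  destruct (strip_decomp c t i R sg HR Hc Hi) as [P [EP [HP [HcP [HQ [Hd Hid]]]]]].
  set (Q := strip i R) in *. clearbody Q. subst R. simpl.
  set (d := src t Q) in *. rewrite edge_word_app in *.
  apply zeq_trans with (edge_word Q ++ [(X d i, sg)] ++ edge_word P).
  - rewrite <- app_assoc. apply zeq_ctxr with d; [|exact HQ].
    apply (edge_path_D_commute c d (rev P) [(i, sg)] HcP).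
    intros x [<-|[]]. apply Forall_rev, HP.
  - replace ((edge_word Q ++ (X d i, sg) :: winv (edge_word Q)) ++ edge_word Q ++ edge_word P)
      with ((edge_word Q ++ [(X d i, sg)]) ++ (winv (edge_word Q) ++ edge_word Q) ++ edge_word P)
      by (rewrite <- !app_assoc; reflexivity).
    rewrite app_assoc.
    apply (zeq_ctx d d [] _ c t (edge_word Q ++ [(X d i, sg)]) (edge_word P)); [| | exact HcP].
    + apply zeq_sym, (zeq_winv_cat _ _ _ HQ).
    + apply path_cat with d; [exact HQ | apply path_X; auto].
Qed.

Lemma zeq_Y_edge_word s m p q sg : path s m [(Y p q, sg)] ->
  zeq s m [(Y p q, sg)] (edge_word (letter_edges (Y p q, sg))).
Proof.
  intros Hl. apply path_single in Hl. destruct Hl as [[Hp [Hq Hpq]] [<- <-]].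
  destruct sg; [apply zeq_refl | apply edge_inv; auto].
Qed.

Lemma zeq_edge_push m t R f : path m t (edge_word R) -> valid_gen lt (Y (fst f) (snd f)) ->
  snd f = m -> zeq (fst f) t (edge_word (f :: R)) (edge_word (edge_push R f)).
Proof.
  intros HR [Hf1 [Hf2 Hf3]] <-. destruct (push_cases _ swap R f) as [[R' [-> ->]] | [-> _]].
  - apply path_edge_word_cons in HR. destruct HR as [_ [HR' _]].
    change (f :: swap f :: R') with ([f; swap f] ++ R'). rewrite edge_word_app.
    exact (zeq_ctxr_nil _ _ _ t _ (edge_round_trip (fst f) (snd f) Hf1 Hf2 Hf3) HR').
  - apply zeq_refl.
Qed.

Lemma zeq_edge_word_Y s m t R p q sg : path m t (edge_word R) -> path s m [(Y p q, sg)] ->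
  zeq s t (edge_word R ++ [(Y p q, sg)])
    (edge_word (edge_push_word R (letter_edges (Y p q, sg)))).
Proof.
  intros HR Hl. apply zeq_trans with (edge_word R ++ edge_word (letter_edges (Y p q, sg))).
  - apply zeq_ctxr with m; [apply zeq_Y_edge_word, Hl | exact HR].
  - apply path_single in Hl. destruct Hl as [Hv [<- <-]].
    destruct Hv as [Hp [Hq Hpq]].
    destruct sg; cbn [lsrc ltgt gsrc gtgt fst snd letter_edges] in *; rewrite <- edge_word_app.
    + apply (zeq_edge_push q _ R (p, q)); simpl; auto.
    + apply (zeq_edge_push p _ R (q, p)); simpl; auto using not_eq_sym.
Qed.

Lemma canon_snoc s m t u l : path m t u -> path s m [l] ->
  zeq s t (canon t u ++ [l]) (canon t (u ++ [l])).
Proof.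
  intros Hu Hl. destruct (symbols_ok t u [] m t Hu eq_refl) as [Hok HR].
  assert (HF : Forall (symbol_ok t) (fst (invariant u))) by (apply Forall_push_word; auto).
  unfold canon. rewrite invariant_snoc, <- app_assoc.
  set (F := fst (invariant u)) in *. set (R := snd (invariant u)) in *.
  change (path m t (edge_word R)) in HR.
  destruct l as [[c i|p q] sg].
  - apply path_single in Hl. destruct Hl as [[Hc Hi] [Hm Hs]].
    assert (Hsc : s = c /\ m = c) by (destruct sg; auto). destruct Hsc as [-> ->].
    destruct (strip_decomp c t i R sg HR Hc Hi) as [_ [_ [_ [_ Hok']]]].
    apply zeq_trans with (symbols_word t F ++ symbol_word t ((i, strip i R), sg) ++ edge_word R).
    + apply zeq_ctxr with t; [apply zeq_edge_word_X; auto | apply path_symbols_word, HF].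
    + rewrite app_assoc. apply zeq_ctxl with t; [apply symbols_word_push; auto | exact HR].
  - apply zeq_ctxr with t; [apply zeq_edge_word_Y with m; auto | apply path_symbols_word, HF].
Qed.

Theorem zeq_canon s t u : path s t u -> zeq s t u (canon t u).
Proof.
  revert s; induction u as [|l u IH] using rev_ind; intros s Hu.
  - simpl in Hu; subst; apply zeq_refl.
  - apply path_app in Hu. destruct Hu as [m [Hu Hl]].
    apply zeq_trans with (canon t u ++ [l]).
    + apply zeq_ctxl with m; auto.
    + apply canon_snoc with m; auto.
Qed.

(** * Conjugation *)

Lemma symbols_conj_D u c (w : fword T) :
  symbols [] (u ++ D c w ++ winv u) =
  symbols [] u ++ map (fun x => ((fst x, strip (fst x) (snd (invariant u))), snd x)) w ++
  inv_word _ symbol_inv (symbols [] u).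
Proof.
  rewrite !symbols_app, symbols_D, edges_D.
  change (edge_push_word (edge_push_word [] (edges u)) []) with (edge_push_word [] (edges u)).
  rewrite symbols_winv by (simpl; auto). reflexivity.
Qed.

Lemma conj_X_invariant a b u i : zeq a a (D a [(i, true)]) (u ++ D b [(i, true)] ++ winv u) ->
  strip i (snd (invariant u)) = [] /\ forall z, In z (fst (invariant u)) -> fst z = (i, []).
Proof.
  intros H. apply zeq_invariant, (f_equal fst), eq_sym in H.
  change (fst (invariant (u ++ D b [(i, true)] ++ winv u)))
    with (symbol_push_word [] (symbols [] (u ++ D b [(i, true)] ++ winv u))) in H.
  rewrite symbols_conj_D in H. cbn [map fst snd] in H.
  destruct (conj_letter _ _ symbol_inv_involutive _ ((i, []), true) _ H) as [E1 E2].
  split; [injection E1 as E1; exact E1 | intros z Hz; destruct (E2 z Hz) as [-> | ->]; reflexivity].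
Qed.

Lemma yreduced_snoc (L : list (T * T)) f f' :
  yreduced (L ++ [f]) -> ~ (fst f = snd f' /\ snd f = fst f') -> yreduced (L ++ [f; f']).
Proof. induction L as [|h [|h' L] IH]; simpl; tauto. Qed.

Lemma yreduced_rev R : reduced _ swap R -> yreduced (rev R).
Proof.
  induction R as [|f R IH]; [simpl; auto|]. destruct R as [|g R]; [simpl; auto|].
  intros [H1 H2]. specialize (IH H2). simpl rev in *. rewrite <- app_assoc.
  apply yreduced_snoc; [exact IH|]. intros [E1 E2]. apply H1.
  destruct f, g; unfold swap; simpl in *; subst; reflexivity.
Qed.

Lemma edge_stack_avoiding b g R : le lt g b -> (forall i, lt i g -> strip i R = []) ->
  forall d, passes_through b (rev R) d -> ~ lt d g.
Proof.
  intros Hgb HR d Hd Hlt. unfold passes_through in Hd.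
  destruct (rev R) as [|f e] eqn:ER.
  - subst d. exact (not_lt_of_le _ _ Hgb Hlt).
  - destruct Hd as [f' [Hf' Hd]].
    assert (Hf'R : In f' R) by (apply in_rev; rewrite ER; exact Hf').
    pose proof (proj1 (strip_nil d R) (HR d Hlt)) as Habove. rewrite Forall_forall in Habove.
    destruct (Habove f' Hf'R) as [H1 H2].
    destruct Hd as [<- | <-]; eapply lt_irrefl; eassumption.
Qed.

Lemma conj_D_in_ZY_avoiding a b g u : ge2 lt g -> le lt g b -> path b a u ->
  (forall w, in_G lt g w -> zeq a a (D a w) (u ++ D b w ++ winv u)) ->
  in_ZY_avoiding lt b a g u.
Proof.
  intros Hg Hgb Hu H.
  assert (key : forall i, lt i g -> strip i (snd (invariant u)) = [] /\
                  forall z, In z (fst (invariant u)) -> fst z = (i, [])).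
  { intros i Hi. apply conj_X_invariant with a b. apply H. intros x [<-|[]]; exact Hi. }
  assert (HN : fst (invariant u) = []).
  { destruct Hg as [i0 [i1 [H01 H1g]]].
    destruct (fst (invariant u)) as [|z N]; [reflexivity | exfalso].
    assert (Hz : In z (z :: N)) by (left; reflexivity).
    pose proof (eq_trans (eq_sym (proj2 (key i0 (lt_trans _ _ _ H01 H1g)) z Hz))
      (proj2 (key i1 H1g) z Hz)) as E.
    injection E as ->. exact (lt_irrefl _ H01). }
  set (R := snd (invariant u)) in *.
  exists (rev R). split; [|split; [|split]].
  - apply yreduced_rev, reduced_push_word; simpl; auto.
  - exact (proj2 (symbols_ok a u [] b a Hu eq_refl)).
  - pose proof (zeq_canon _ _ _ Hu) as E. unfold canon in E. rewrite HN in E. exact E.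
  - apply edge_stack_avoiding; [exact Hgb|]. intros i Hi. apply key, Hi.
Qed.

End Groupoid.

Theorem lemma3p11 (T : Type) (lt : T -> T -> Prop)
  (Hwo : well_ordering lt) (Hcof : uncountable_cofinality lt)
  (a b g : T) (Ha : ge2 lt a) (Hb : ge2 lt b)
  (u : list (letter T)) (Hu : path lt b a u)
  (Hg : ge2 lt g) (Hga : le lt g a) (Hgb : le lt g b) :
  in_ZY_avoiding lt b a g u <->
  (forall w : fword T, in_G lt g w ->
     zeq lt a a (D a w) (u ++ D b w ++ winv u)).
Proof.
  destruct Hwo as [Hirr [Htrans [Htotal _]]]. split.
  - apply in_ZY_avoiding_conj_D; assumption.
  - apply conj_D_in_ZY_avoiding; assumption.
Qed.
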